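(* The number of unique configurations of length $n$ is $\Omega(2^n)$.
   Context: For a real sequence $A=(a_1,\dots,a_n)$, a configuration is a sequence $P=(p_1,\dots,p_n)$ with $p_\ell\in\{1,\dots,n-\ell+1\}$ for each $\ell$; $P$ is an output configuration for $A$ if for every $\ell=1,\dots,n$ the sum $a_{p_\ell}+\dots+a_{p_\ell+\ell-1}$ is maximum among all sums of $\ell$ consecutive entries of $A$. A configuration $P$ is unique if there exists $A\in\mathbb{R}^n$ whose only output configuration is $P$. *)

From HB Require Import structures.
From mathcomp Require Import all_boot all_order all_algebra.
From mathcomp Require Import reals.
Set Implicit Arguments. Unset Strict Implicit. Unset Printing Implicit Defensive.
Import Order.TTheory GRing.Theory Num.Theory.
Local Open Scope ring_scope.

(* Conventions (0-indexed): a sequence A = (a_1..a_n) is  a : 'I_n -> R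
   (a_{k+1} = a k).  A configuration is  P : {ffun 'I_n -> 'I_n}  where the
   entry at index i : 'I_n corresponds to length l = i+1 and P i is the
   0-indexed start position, i.e. p_l = P i + 1.  The range constraint
   p_l \in {1..n-l+1} becomes  P i + i < n. *)

Definition window (R : realType) (n : nat) (a : 'I_n -> R) (s l : nat) : R :=
  \sum_(k < n | (s <= k < s + l)%N) a k.

Definition is_config (n : nat) (P : {ffun 'I_n -> 'I_n}) : Prop :=
  forall i : 'I_n, (P i + i < n)%N.

Definition output_config (R : realType) (n : nat) (a : 'I_n -> R)
    (P : {ffun 'I_n -> 'I_n}) : Prop :=
  is_config P /\
  forall (i : 'I_n) (s : nat), (s + i < n)%N ->
    window a s i.+1 <= window a (P i) i.+1.

Definition unique_config (R : realType) (n : nat) (P : {ffun 'I_n -> 'I_n}) : Prop :=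
  is_config P /\
  exists a : 'I_n -> R, output_config a P /\
    forall Q : {ffun 'I_n -> 'I_n}, output_config a Q -> Q = P.

From HB Require Import structures.
From mathcomp Require Import all_boot all_order all_algebra.
From mathcomp Require Import reals.
From mathcomp Require Import zify.
Import Order.TTheory GRing.Theory Num.Theory.
Set Implicit Arguments. Unset Strict Implicit. Unset Printing Implicit Defensive.
Local Open Scope ring_scope.

(* A configuration whose windows are nested (the window of length l+1 extends
   the window of length l by one entry, on the left or on the right) is unique:
   give every entry the weight -B^e, where e is the index of the first window
   containing it and B = n+1.  The nested window of length i+1 then sums to at
   least -n B^i, while every other window of that length contains an entry of
   weight at most -B^(i+1).  The n-1 left/right choices determine a nested
   configuration, so there are 2^(n-1) of them. *)

Section NestedWindows.

Variables (R : realType) (n : nat) (s : nat -> nat).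
Hypothesis s_fits : forall i, (i < n)%N -> (s i + i < n)%N.
Hypothesis s_step : forall i, (s i.+1 <= s i <= (s i.+1).+1)%N.

Definition in_window (i k : nat) : bool := (s i <= k < s i + i.+1)%N.

Lemma in_window_mono i j k : (i <= j)%N -> in_window i k -> in_window j k.
Proof.
move=> /subnKC <-; elim: (j - i)%N => [|d IH]; first by rewrite addn0.
by move=> /IH; have := s_step (i + d); rewrite /in_window !addnS; lia.
Qed.

Lemma in_last_window k : (k < n)%N -> in_window n.-1 k.
Proof.
move=> lt_kn; have /s_fits : (n.-1 < n)%N by lia.
by rewrite /in_window; lia.
Qed.

Definition first_window (k : 'I_n) : nat :=
  ex_minn (ex_intro (in_window^~ k) n.-1 (in_last_window (ltn_ord k))).

Let B : R := n.+1%:R.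

Definition nested_weight (k : 'I_n) : R := - B ^+ first_window k.

Lemma nested_weight_le0 k : nested_weight k <= 0.
Proof. by rewrite oppr_le0 exprn_ge0 ?ler0n. Qed.

Lemma nested_weight_ge i (k : 'I_n) :
  in_window i k -> - B ^+ i <= nested_weight k.
Proof.
rewrite /nested_weight /first_window; case: ex_minnP => e _ min_e /min_e le_ei.
by rewrite lerN2 ler_weXn2l // ler1n.
Qed.

Lemma nested_weight_le i (k : 'I_n) :
  ~~ in_window i k -> nested_weight k <= - B ^+ i.+1.
Proof.
rewrite /nested_weight /first_window; case: ex_minnP => e in_e _ out_i.
have lt_ie : (i < e)%N.
  by rewrite ltnNge; apply: contra out_i => /in_window_mono; apply.
by rewrite lerN2 ler_weXn2l // ler1n.
Qed.

Lemma nested_window_ge i : - B ^+ i *+ n <= window nested_weight (s i) i.+1.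
Proof.
rewrite -[n in _ *+ n]card_ord -sumr_const /window [X in _ <= X]big_mkcond /=.
apply: ler_sum => k _; case: ifP => [in_k|_]; first exact: nested_weight_ge.
by rewrite oppr_le0 exprn_ge0 ?ler0n.
Qed.

Lemma rival_window_le i t : (t + i < n)%N -> t != s i ->
  window nested_weight t i.+1 <= - B ^+ i.+1.
Proof.
move=> fit_t ne_t.
(* an end of the rival window lying outside the nested one *)
pose k := if (t < s i)%N then t else (t + i)%N.
have lt_kn : (k < n)%N by rewrite /k; case: ifP; lia.
have k_rival : (t <= k < t + i.+1)%N by rewrite /k; case: ifP; lia.
have k_out : ~~ in_window i k by rewrite /in_window /k; case: ifP; lia.
rewrite /window (bigD1 (Ordinal lt_kn)) //= -[X in _ <= X]addr0.
rewrite lerD //; first exact: nested_weight_le.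
by apply: sumr_le0 => j _; apply: nested_weight_le0.
Qed.

Lemma rival_window_lt i t : (t + i < n)%N -> t != s i ->
  window nested_weight t i.+1 < window nested_weight (s i) i.+1.
Proof.
move=> fit_t ne_t; apply: le_lt_trans (rival_window_le fit_t ne_t) _.
apply: lt_le_trans (nested_window_ge i).
rewrite -mulr_natr mulNr ltrN2 exprSr ltr_pM2l ?exprn_gt0 ?ltr0n //.
by rewrite ltr_nat.
Qed.

Lemma nested_config_unique (P : {ffun 'I_n -> 'I_n}) :
  (forall i : 'I_n, P i = s i :> nat) -> unique_config R P.
Proof.
move=> P_s.
have P_cfg : is_config P by move=> i; rewrite P_s s_fits.
split=> //; exists nested_weight; split.
  split=> // i t fit_t; rewrite P_s.
  have [-> //|ne_t] := eqVneq t (s i).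
  exact/ltW/rival_window_lt.
move=> Q [Q_cfg Q_opt]; apply/ffunP => i; apply/val_inj; rewrite /= P_s.
apply/eqP; apply: contraT => ne_Q.
have := Q_opt i (s i) (s_fits (ltn_ord i)).
by rewrite leNgt rival_window_lt.
Qed.

End NestedWindows.

Definition ones_from (m : nat) (b : m.-tuple bool) (i : nat) : nat :=
  count id (drop i b).

Lemma ones_from_step m (b : m.-tuple bool) i :
  (i < m)%N -> ones_from b i = (nth false b i + ones_from b i.+1)%N.
Proof. by move=> lt_im; rewrite /ones_from (drop_nth false) ?size_tuple. Qed.

Lemma ones_from_fits m (b : m.-tuple bool) i :
  (i < m.+1)%N -> (ones_from b i + i < m.+1)%N.
Proof.
move=> lt_im; have := count_size id (drop i b).
by rewrite size_drop size_tuple /ones_from; lia.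
Qed.

Lemma ones_from_nested m (b : m.-tuple bool) i :
  (ones_from b i.+1 <= ones_from b i <= (ones_from b i.+1).+1)%N.
Proof.
have [lt_im|le_mi] := ltnP i m.
  by rewrite [ones_from b i]ones_from_step //; case: (nth false b i) => /=; lia.
by rewrite /ones_from !drop_oversize ?size_tuple // ltnW.
Qed.

(* Bit b_i says whether the window of length i+2 extends the one of length i+1
   to the left. *)
Definition config_of_bits m (b : m.-tuple bool) : {ffun 'I_m.+1 -> 'I_m.+1} :=
  [ffun i : 'I_m.+1 => inord (ones_from b i)].

Lemma config_of_bitsE m (b : m.-tuple bool) (i : 'I_m.+1) :
  config_of_bits b i = ones_from b i :> nat.
Proof. by rewrite ffunE inordK // (leq_ltn_trans (leq_addr i _)) ?ones_from_fits. Qed.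

Lemma config_of_bits_unique (R : realType) m (b : m.-tuple bool) :
  unique_config R (config_of_bits b).
Proof.
apply: nested_config_unique (@ones_from_fits m b) (@ones_from_nested m b) _ _.
exact: config_of_bitsE.
Qed.

Lemma config_of_bits_inj m : injective (@config_of_bits m).
Proof.
move=> b1 b2 eq_b; apply/val_inj/(eq_from_nth (x0 := false)).
  by rewrite !size_tuple.
move=> i; rewrite size_tuple => lt_im.
have ones_eq j : (j < m.+1)%N -> ones_from b1 j = ones_from b2 j.
  by move=> lt_jm; rewrite -!(config_of_bitsE _ (Ordinal lt_jm)) eq_b.
have := ones_from_step b1 lt_im; have := ones_from_step b2 lt_im.
rewrite (ones_eq i (ltnW lt_im)) (ones_eq i.+1 lt_im) => ->.
by move=> /addIn; case: (nth false b1 i); case: (nth false b2 i).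
Qed.

Theorem theorem3 (R : realType) :
  exists c : R, 0 < c /\ exists N : nat, forall n : nat, (N <= n)%N ->
    exists S : {set {ffun 'I_n -> 'I_n}},
      (forall P, P \in S -> unique_config R P) /\ c * 2 ^+ n <= #|S|%:R.
Proof.
exists 2^-1; split; first by rewrite invr_gt0 ltr0n.
exists 1%N => -[//|m] _.
exists [set config_of_bits b | b : m.-tuple bool]; split.
  by move=> P /imsetP [b _ ->]; apply: config_of_bits_unique.
rewrite card_imset; last exact: config_of_bits_inj.
rewrite card_tuple card_bool natrX exprS mulrA mulVf ?mul1r //.
by rewrite pnatr_eq0.
Qed.
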